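(* Let $k$ be a positive integer, $G$ a graph and $K$ a subgraph of $G$ with the following property: for every $s\ge1$, every cover $H$ of $G$ with respect to $L(v)=\{1,\dots,s\}$ for all $v$, and every $F=(f_1,\dots,f_s)$ with $f_i:V(G)\to\mathbb{Z}_{\ge0}$ and $|f(v)|\ge k$ for every vertex $v$, each DP-$F$-coloring of $K$ (with respect to the restriction of $H$ to the vertices over $V(K)$) can be extended to a DP-$F$-coloring of $(G,H)$. Let $H$ and $F$ be such a cover and such a function, and let $R_1$ be a DP-$F$-coloring of $K$. Then there exists a DP-$F$-coloring of $(G,H)$ with a strictly $F$-degenerate order $S$ such that the $|R_1|$ lowest-ordered elements of $S$ are the elements of $R_1$.
   Context: $|f(v)|=f_1(v)+\cdots+f_s(v)$. A cover $H$ of $G$ w.r.t. $L$ has vertex set $\{(u,c):c\in L(u)\}$, each $\{u\}\times L(u)$ is a clique, for each edge $uv$ the edges between $\{u\}\times L(u)$ and $\{v\}\times L(v)$ form a matching, and there are no such edges for non-adjacent $u,v$. A representative set contains exactly one vertex of each $\{v\}\times L(v)$. A DP-$F$-coloring is a representative set $R$ together with an ordering of $R$ (a strictly $F$-degenerate order) in which each $(v,i)\in R$ has fewer than $f_i(v)$ $H$-neighbors among earlier elements of $R$; extending a coloring means finding a DP-$F$-coloring of $(G,H)$ containing it. *)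

From mathcomp Require Import all_boot.
Set Implicit Arguments. Unset Strict Implicit. Unset Printing Implicit Defensive.

Definition simple_graph (T : finType) (e : rel T) : Prop :=
  symmetric e /\ irreflexive e.

Definition subgraph (T : finType) (e : rel T) (VK : {set T}) (eK : rel T) : Prop :=
  (forall u v, eK u v -> [&& u \in VK, v \in VK & e u v]) /\ symmetric eK.

(* A cover H of G with respect to the list assignment L(v) = {1,...,s}
   (the colours are represented by 'I_s).  The vertex (u, c) of H
   corresponds to the pair (u,c) with c \in L(u). *)
Definition is_cover (T : finType) (e : rel T) (s : nat) (H : rel (T * 'I_s)) : Prop :=
  [/\ symmetric H, irreflexive H,
      (forall u (c d : 'I_s), c != d -> H (u, c) (u, d)),
      (forall u v (c d1 d2 : 'I_s), u != v -> H (u, c) (v, d1) -> H (u, c) (v, d2) -> d1 = d2) &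
      (forall u v (c d : 'I_s), u != v -> ~~ e u v -> ~~ H (u, c) (v, d))].

Definition fsize (T : finType) (s : nat) (F : 'I_s -> T -> nat) (v : T) : nat :=
  \sum_(i < s) F i v.

(* A DP-F-coloring of the vertices in D (with respect to the cover H restricted
   to the vertices over D) is a representative set R of the fibres over D
   together with a strictly F-degenerate order of R; we represent it by the
   duplicate-free sequence S listing R in that order. *)
Definition DPF_coloring (T : finType) (s : nat) (H : rel (T * 'I_s))
    (F : 'I_s -> T -> nat) (D : {set T}) (S : seq (T * 'I_s)) : Prop :=
  [/\ uniq S,
      (forall x, x \in S -> x.1 \in D),
      (forall v, v \in D -> count (fun x => x.1 == v) S = 1) &
      (forall p x q, S = p ++ x :: q -> count (H x) p < F x.2 x.1)].

From mathcomp Require Import all_boot.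
Set Implicit Arguments. Unset Strict Implicit. Unset Printing Implicit Defensive.

(* Give every vertex one extra colour, adjacent only inside its own fibre, with
   weight k on V(K) and 0 elsewhere; give each element of R1 weight 1 and delete
   the cover edges between distinct elements of R1.  Weights still sum to at least
   k, R1 is still a coloring of K, and the hypothesis extends it.  The extension
   cannot use the extra colour (weight 0 off K, and K is already coloured by R1),
   so it is a coloring of the original cover, in which every element of R1, having
   weight 1, precedes all its neighbours outside R1.  Moving R1 to the front of the order
   therefore adds no earlier neighbour to any other element. *)

Section DegenerateOrder.
Variable X : eqType.
Implicit Types (H : rel X) (w : X -> nat) (A S : seq X).

Definition degenerate_order H w S : Prop :=
  forall x, x \in S -> count (H x) (take (index x S) S) < w x.

Lemma degenerate_orderP H w S : uniq S ->
  degenerate_order H w S <-> (forall p x q, S = p ++ x :: q -> count (H x) p < w x).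
Proof.
move=> uS; split=> [degS p x q defS | degS x xS].
- have := degS x; rewrite defS mem_cat mem_head orbT => /(_ isT).
  move: uS; rewrite defS cat_uniq /= => /and3P[_ /norP[xNp _] _].
  by rewrite index_cat (negbTE xNp) /= eqxx addn0 take_size_cat.
- apply: (degS _ _ (drop (index x S).+1 S)).
  by rewrite -{1}(cat_take_drop (index x S) S) (drop_nth x) ?index_mem ?nth_index.
Qed.

Lemma degenerate_order_gt0 H w S x : degenerate_order H w S -> x \in S -> 0 < w x.
Proof. by move=> degS /degS; exact: leq_ltn_trans (leq0n _). Qed.

Lemma degenerate_order_precedes H w S a x :
  degenerate_order H w S -> a \in S -> x \in S -> w a <= 1 -> a != x -> H a x ->
  index a S < index x S.
Proof.
move=> degS aS xS wa1 neq_ax Hax.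
have : x \notin take (index a S) S.
  apply: contraTN (degS a aS) => x_pre; rewrite -leqNgt (leq_trans wa1) // -has_count.
  by apply/hasP; exists x.
rewrite in_take // -leqNgt => le_ax; rewrite ltn_neqAle le_ax andbT.
by apply: contra neq_ax => /eqP/(index_inj a aS xS)->.
Qed.

Lemma take_index_filter (a : pred X) S x : a x ->
  take (index x (filter a S)) (filter a S) = filter a (take (index x S) S).
Proof.
move=> ax; elim: S => //= z S IH.
case: (eqVneq z x) => [->|zx]; first by rewrite ax /= eqxx.
by case az: (a z); rewrite /= ?az ?(negbTE zx) -IH.
Qed.

Lemma perm_cat_filter_notin A S : uniq A -> uniq S -> {subset A <= S} ->
  perm_eq (A ++ [seq x <- S | x \notin A]) S.
Proof.
move=> uA uS sAS; apply: (@perm_trans _ ([seq x <- S | x \in A] ++ [seq x <- S | x \notin A])).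
  rewrite perm_cat2r perm_sym uniq_perm ?filter_uniq // => z.
  by rewrite mem_filter andb_idr //; exact: sAS.
by rewrite (perm_filterC (mem A)) perm_refl.
Qed.

Lemma degenerate_order_prepend H H1 w w1 A S :
  uniq A -> {subset A <= S} ->
  (forall x, x \notin A -> H1 x =1 H x) -> (forall x, x \notin A -> w1 x = w x) ->
  {in A & S, forall a x, x \notin A -> H x a -> index a S < index x S} ->
  degenerate_order H w A -> degenerate_order H1 w1 S ->
  degenerate_order H w (A ++ [seq x <- S | x \notin A]).
Proof.
move=> uA sAS H1E w1E precA degA degS x.
case: (boolP (x \in A)) => [xA _ | xNA].
  by rewrite index_cat xA take_cat index_mem xA; exact: degA.
rewrite mem_cat (negbTE xNA) mem_filter xNA /= => xS.
rewrite index_cat (negbTE xNA) takeD take_size_cat // drop_size_cat // count_cat.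
rewrite take_index_filter // -w1E //; apply: leq_ltn_trans (degS x xS).
rewrite (eq_count (H1E x xNA)); set P := take _ S.
have /permP <- : perm_eq ([seq y <- P | y \in A] ++ [seq y <- P | y \notin A]) P.
  exact/permPl/perm_filterC.
rewrite count_cat leq_add2r.
rewrite -!size_filter; apply: uniq_leq_size; first exact: filter_uniq.
move=> z; rewrite !mem_filter => /andP[Hxz zA].
by rewrite Hxz zA in_take ?sAS // precA // sAS.
Qed.

End DegenerateOrder.

Lemma degenerate_order_map (X Y : eqType) (f : X -> Y) (HX : rel X) (HY : rel Y)
    (wX : X -> nat) (wY : Y -> nat) S :
  injective f -> (forall a b, HY (f a) (f b) = HX a b) -> (forall x, wY (f x) = wX x) ->
  degenerate_order HY wY (map f S) <-> degenerate_order HX wX S.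
Proof.
move=> injf Hf wf.
have countE x s : count (HY (f x)) (map f s) = count (HX x) s.
  by rewrite count_map; apply: eq_count => y; exact: Hf.
split=> degS x.
- by move=> xS; have := degS _ (map_f f xS); rewrite index_map // -map_take countE wf.
- by case/mapP=> y yS ->; rewrite index_map // -map_take countE wf; exact: degS.
Qed.

Lemma DPF_coloringE (T : finType) (s : nat) (H : rel (T * 'I_s)) (F : 'I_s -> T -> nat)
    (D : {set T}) (S : seq (T * 'I_s)) :
  DPF_coloring H F D S <->
  [/\ uniq S, (forall x, x \in S -> x.1 \in D),
      (forall v, v \in D -> count (fun x => x.1 == v) S = 1) &
      degenerate_order H (fun x => F x.2 x.1) S].
Proof. by split=> -[uS memS cntS degS]; split=> //; apply/(degenerate_orderP _ _ uS). Qed.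

Lemma DPF_coloring_fibre_inj (T : finType) (s : nat) (H : rel (T * 'I_s))
    (F : 'I_s -> T -> nat) (D : {set T}) (S : seq (T * 'I_s)) :
  DPF_coloring H F D S -> {in S &, injective fst}.
Proof.
move=> [uS memS cntS _] x y xS yS exy; apply: contra_eq (cntS _ (memS x xS)) => nxy.
rewrite neq_ltn orbC -size_filter; apply/orP; left.
apply: (uniq_leq_size (s1 := [:: x; y])); first by rewrite /= inE nxy.
by move=> z; rewrite !inE mem_filter => /orP[]/eqP->; rewrite ?xS ?yS ?exy eqxx.
Qed.

Section Covers.
Variables (T : finType) (s : nat).
Implicit Types (e : rel T) (H : rel (T * 'I_s)) (F : 'I_s -> T -> nat)
  (R : seq (T * 'I_s)).

Definition unlink_cover R H : rel (T * 'I_s) :=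
  fun a b => H a b && ~~ [&& a \in R, b \in R & a.1 != b.1].

Definition pin_weight R F : 'I_s -> T -> nat :=
  fun c v => if (v, c) \in R then 1 else F c v.

Lemma unlink_cover_is_cover e R H : is_cover e H -> is_cover e (unlink_cover R H).
Proof.
case=> symH irrH cliqH matH nadjH; split.
- by move=> a b; rewrite /unlink_cover symH andbCA eq_sym.
- by move=> a; rewrite /unlink_cover irrH.
- by move=> u c d cd; rewrite /unlink_cover cliqH //= eqxx !andbF.
- by move=> u v c d1 d2 uv /andP[h1 _] /andP[h2 _]; exact: matH h1 h2.
- by move=> u v c d uv nuv; rewrite /unlink_cover (negbTE (nadjH _ _ _ _ uv nuv)).
Qed.

Definition old_colour (x : T * 'I_s) : T * 'I_s.+1 := (x.1, lift ord_max x.2).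

Definition of_old_colour (y : T * 'I_s.+1) : option (T * 'I_s) :=
  omap (pair y.1) (unlift ord_max y.2).

Lemma old_colourK : pcancel old_colour of_old_colour.
Proof. by case=> v c; rewrite /of_old_colour /= liftK. Qed.

Lemma of_old_colourK : ocancel of_old_colour old_colour.
Proof. by case=> v c; rewrite /of_old_colour /=; case: unliftP => [c' ->|]. Qed.

Lemma old_colour_inj : injective old_colour.
Proof. exact: pcan_inj old_colourK. Qed.

Definition add_colour_cover H : rel (T * 'I_s.+1) :=
  fun a b => if (of_old_colour a, of_old_colour b) is (Some x, Some y) then H x y
             else (a.1 == b.1) && (a.2 != b.2).

Definition add_colour_weight F (g : T -> nat) : 'I_s.+1 -> T -> nat :=
  fun c v => if unlift ord_max c is Some c' then F c' v else g v.

Lemma add_colour_cover_old H a b :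
  add_colour_cover H (old_colour a) (old_colour b) = H a b.
Proof. by rewrite /add_colour_cover !old_colourK. Qed.

Lemma add_colour_weight_old F g c v : add_colour_weight F g (lift ord_max c) v = F c v.
Proof. by rewrite /add_colour_weight liftK. Qed.

Lemma add_colour_weight_new F g v : add_colour_weight F g ord_max v = g v.
Proof. by rewrite /add_colour_weight unlift_none. Qed.

Lemma fsize_add_colour_weight F g v : fsize (add_colour_weight F g) v = g v + fsize F v.
Proof.
rewrite /fsize (bigD1_ord ord_max) //= add_colour_weight_new; congr (_ + _).
by apply: eq_bigr => c _; rewrite add_colour_weight_old.
Qed.

Lemma add_colour_cover_is_cover e H : is_cover e H -> is_cover e (add_colour_cover H).
Proof.
case=> symH irrH cliqH matH nadjH; split.
- move=> [u c] [v d]; rewrite /add_colour_cover /of_old_colour /=.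
  case: unlift => [c'|]; case: unlift => [d'|] /=;
    [exact: symH | by rewrite (eq_sym v) (eq_sym d) ..].
- move=> [u c]; rewrite /add_colour_cover /of_old_colour /=.
  by case: unlift => [c'|] /=; [exact: irrH | rewrite !eqxx].
- move=> u c d; rewrite /add_colour_cover /of_old_colour /=.
  case: (unliftP ord_max c) => [c' ->|->]; case: (unliftP ord_max d) => [d' ->|->] /= cd;
    [ by apply: cliqH; apply: contraNneq cd => ->; rewrite eqxx
    | by rewrite eqxx cd ..
    | by rewrite eqxx in cd ].
- move=> u v c d1 d2 uv; rewrite /add_colour_cover /of_old_colour /=.
  case: unlift => [c'|]; last by rewrite (negbTE uv).
  case: (unliftP ord_max d1) => [d1' ->|_] /=; last by rewrite (negbTE uv).
  case: (unliftP ord_max d2) => [d2' ->|_] /=; last by rewrite (negbTE uv).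
  by move=> h1 h2; rewrite (matH _ _ _ _ _ uv h1 h2).
- move=> u v c d uv nuv; rewrite /add_colour_cover /of_old_colour /=.
  case: unlift => [c'|]; case: unlift => [d'|] /=; rewrite ?(negbTE uv) //.
  exact: nadjH.
Qed.

Lemma DPF_coloring_old_colour H F g D S :
  DPF_coloring (add_colour_cover H) (add_colour_weight F g) D (map old_colour S) <->
  DPF_coloring H F D S.
Proof.
have degE : degenerate_order (add_colour_cover H) (fun y => add_colour_weight F g y.2 y.1)
    (map old_colour S) <-> degenerate_order H (fun x => F x.2 x.1) S.
  exact: degenerate_order_map old_colour_inj (add_colour_cover_old H)
    (fun x => add_colour_weight_old F g x.2 x.1).
have uE := map_inj_uniq old_colour_inj S.
split=> /DPF_coloringE[uS memS cntS degS]; apply/DPF_coloringE; split.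
- by rewrite -uE.
- by move=> x xS; exact: memS (old_colour x) (map_f _ xS).
- by move=> v vD; rewrite -(cntS v vD) count_map.
- exact/degE.
- by rewrite uE.
- by move=> _ /mapP[x xS ->]; exact: memS.
- by move=> v vD; rewrite count_map cntS.
- exact/degE.
Qed.

End Covers.

Arguments old_colour {T s}.
Arguments of_old_colour {T s}.

Section Extension.
Variables (T : finType) (s : nat) (H : rel (T * 'I_s)) (F : 'I_s -> T -> nat).
Variables (VK : {set T}) (R1 : seq (T * 'I_s)).
Hypothesis R1col : DPF_coloring H F VK R1.

Lemma fsize_pin_weight_notin v : v \notin VK -> fsize (pin_weight R1 F) v = fsize F v.
Proof.
case: R1col => _ memR1 _ _ vNK; apply: eq_bigr => c _; rewrite /pin_weight.
by case: ifP => // /memR1; rewrite (negbTE vNK).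
Qed.

Lemma DPF_coloring_pin_weight : irreflexive H ->
  DPF_coloring (unlink_cover R1 H) (pin_weight R1 F) VK R1.
Proof.
move=> irrH; have R1inj := DPF_coloring_fibre_inj R1col.
case/DPF_coloringE: R1col => uR1 memR1 cntR1 _; apply/DPF_coloringE; split=> // x xR1.
rewrite /pin_weight /= -surjective_pairing xR1 ltnS leqn0 eqn0Ngt -has_count.
apply/hasPn => y /mem_take yR1; rewrite /unlink_cover xR1 yR1 /= negbK.
by case: eqP => [/(R1inj _ _ xR1 yR1) ->|]; rewrite ?irrH ?andbF.
Qed.

Lemma pmap_of_old_colourK (H' : rel (T * 'I_s)) (F' : 'I_s -> T -> nat) (g : T -> nat) R2 :
  (forall v, v \notin VK -> g v = 0) ->
  DPF_coloring (add_colour_cover H') (add_colour_weight F' g) [set: T] R2 ->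
  {subset map old_colour R1 <= R2} ->
  map old_colour (pmap of_old_colour R2) = R2.
Proof.
move=> g0 R2col R1R2; rewrite (pmap_filter (@of_old_colourK _ _)).
apply/all_filterP/allP => -[v c] yR2; rewrite /of_old_colour /=.
case: unliftP yR2 => // -> yR2.
case: (boolP (v \in VK)) => [vK | vNK].
  have /hasP[r rR1 /eqP rv] : has (fun x => x.1 == v) R1.
    by case: R1col => _ _ cntR1 _; rewrite has_count cntR1.
  have := DPF_coloring_fibre_inj R2col (R1R2 _ (map_f old_colour rR1)) yR2 rv.
  by move/(congr1 snd)/eqP; rewrite /= lift_eqF.
case/DPF_coloringE: R2col => _ _ _ degR2.
by have := degenerate_order_gt0 degR2 yR2; rewrite /= add_colour_weight_new g0.
Qed.

Lemma DPF_coloring_prepend S : symmetric H ->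
  DPF_coloring (unlink_cover R1 H) (pin_weight R1 F) [set: T] S -> {subset R1 <= S} ->
  DPF_coloring H F [set: T] (R1 ++ [seq x <- S | x \notin R1]).
Proof.
move=> symH /DPF_coloringE[uS _ cntS degS] R1S.
case/DPF_coloringE: R1col => uR1 _ _ degR1.
have permS := perm_cat_filter_notin uR1 uS R1S.
apply/DPF_coloringE; split=> [||v _|].
- by rewrite (perm_uniq permS).
- by move=> x; rewrite in_setT.
- by rewrite (permP permS) cntS ?in_setT.
apply: (degenerate_order_prepend uR1 R1S _ _ _ degR1 degS).
- by move=> x xNR1 y; rewrite /unlink_cover (negbTE xNR1) andbT.
- by move=> x xNR1; rewrite /pin_weight /= -surjective_pairing (negbTE xNR1).
move=> a x aR1 xS xNR1 Hxa; apply: (degenerate_order_precedes degS (R1S a aR1) xS).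
- by rewrite /pin_weight -surjective_pairing aR1.
- by apply: contraNneq xNR1 => <-.
- by rewrite /unlink_cover aR1 (negbTE xNR1) andbT symH.
Qed.

End Extension.

Theorem lemma5 (k : nat) (T : finType) (e : rel T) (VK : {set T}) (eK : rel T) :
  0 < k -> simple_graph e -> subgraph e VK eK ->
  (forall (s : nat) (H : rel (T * 'I_s)) (F : 'I_s -> T -> nat),
     0 < s -> is_cover e H -> (forall v, k <= fsize F v) ->
     forall R1, DPF_coloring H F VK R1 ->
       exists R2, DPF_coloring H F [set: T] R2 /\ {subset R1 <= R2}) ->
  forall (s : nat) (H : rel (T * 'I_s)) (F : 'I_s -> T -> nat),
    0 < s -> is_cover e H -> (forall v, k <= fsize F v) ->
    forall R1, DPF_coloring H F VK R1 ->
      exists S, DPF_coloring H F [set: T] S /\ perm_eq (take (size R1) S) R1.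
Proof.
(* One extra colour is added before invoking the extension property. *)
move=> _ _ _ extend s H F _ coverH Fk R1 R1col.
have [symH irrH _ _ _] := coverH.
pose g v := if v \in VK then k else 0.
pose H2 := add_colour_cover (unlink_cover R1 H).
pose F2 := add_colour_weight (pin_weight R1 F) g.
have cover2 : is_cover e H2 by apply/add_colour_cover_is_cover/unlink_cover_is_cover.
have F2k v : k <= fsize F2 v.
  rewrite fsize_add_colour_weight /g; case: ifPn => vK; first exact: leq_addr.
  by rewrite add0n (fsize_pin_weight_notin R1col vK).
have R1col2 : DPF_coloring H2 F2 VK (map old_colour R1).
  exact/DPF_coloring_old_colour/DPF_coloring_pin_weight.
have [R2 [R2col R1R2]] := extend _ _ _ (ltn0Sn s) cover2 F2k _ R1col2.
set S := pmap of_old_colour R2.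
have R2E : map old_colour S = R2.
  by apply: (pmap_of_old_colourK R1col _ R2col) => // v; rewrite /g => /negbTE ->.
have Scol : DPF_coloring (unlink_cover R1 H) (pin_weight R1 F) [set: T] S.
  by apply/(DPF_coloring_old_colour _ _ g); rewrite R2E.
have R1S : {subset R1 <= S}.
  by move=> x /(map_f old_colour)/R1R2; rewrite -R2E mem_map //; exact: old_colour_inj.
exists (R1 ++ [seq x <- S | x \notin R1]); split; last by rewrite take_size_cat.
exact: (DPF_coloring_prepend R1col).
Qed.
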